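(* Let $p$ be an odd prime, $\xi = e^{2\pi i/p^2}$, and $C$ the $p\times p$ cycle matrix. Let $\mathcal{T}$ be the set of all $2p\times 2p$ block-diagonal matrices of the form \[A = \operatorname{diag}\!\left(DC^k,\ 1,\ \xi^{k+a_1p},\ \xi^{2k+a_2p},\ \dots,\ \xi^{(p-1)k+a_{p-1}p}\right),\] where $D$ ranges over all $p\times p$ unitary diagonal matrices with $\det D=1$, $k\in\{0,1,\dots,p-1\}$, and $a_j\in\{0,1,\dots,p-1\}$ for $j=1,\dots,p-1$. Then $\mathcal{T}$ (a group of unitary $2p\times 2p$ matrices) is $\frac{1}{2p^2}$-argument-submultiplicative.
   Context: The $p\times p$ cycle matrix $C$ has entries $C_{j,j+1}=1$ for $j=1,\dots,p-1$, $C_{p,1}=1$, and all other entries $0$. For a complex number $z\neq 0$, $\arg(z)\in(-\pi,\pi]$ denotes its principal argument; $\sigma(M)$ denotes the spectrum of a matrix $M$. A group $\mathcal{G}$ of unitary $n\times n$ matrices is called $\varepsilon'$-argument-submultiplicative ($\varepsilon'$-ASM) if for every $A,B\in\mathcal{G}$ and every $\gamma\in\sigma(AB)$ there exist $\alpha\in\sigma(A)$ and $\beta\in\sigma(B)$ such that $\frac{1}{2\pi}\left|\arg\left(\frac{\alpha\beta}{\gamma}\right)\right|\le \varepsilon'$. *)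

From HB Require Import structures.
From mathcomp Require Import all_boot all_order all_algebra.
From mathcomp Require Import all_classical all_reals.
From mathcomp Require Import topology normedtype trigo.
From mathcomp Require Import complex.
Set Implicit Arguments. Unset Strict Implicit. Unset Printing Implicit Defensive.
Import Order.TTheory GRing.Theory Num.Theory.
Local Open Scope ring_scope.
Local Open Scope complex_scope.

Section Defs.
Variable R : realType.
Local Notation C := R[i].

Definition cmod (z : C) : R := Num.sqrt (complex.Re z ^+ 2 + complex.Im z ^+ 2).

(* principal argument arg z in (-pi, pi] (for z <> 0) *)
Definition carg (z : C) : R :=
  if 0 <= complex.Im z then acos (complex.Re z / cmod z) else - acos (complex.Re z / cmod z).

Definition expi (t : R) : C := cos t +i* sin t.

Definition spectrum n (M : 'M[C]_n) : C -> Prop := fun g => eigenvalue M g.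

Definition adjmx m n (M : 'M[C]_(m, n)) : 'M[C]_(n, m) := (map_mx Num.conj M)^T.
Definition unitary_mx n (M : 'M[C]_n) : Prop := M *m adjmx M = 1%:M.

Definition unitary_group n (G : 'M[C]_n -> Prop) : Prop :=
  [/\ G 1%:M,
      (forall A B, G A -> G B -> G (A *m B)),
      (forall A, G A -> exists2 B, G B & A *m B = 1%:M) &
      (forall A, G A -> unitary_mx A)].

Definition ASM n (eps : R) (G : 'M[C]_n -> Prop) : Prop :=
  unitary_group G /\
  forall A B, G A -> G B -> forall g, spectrum (A *m B) g ->
    exists a b, [/\ spectrum A a, spectrum B b &
      `|carg (a * b / g)| / (2 * pi) <= eps].

(* the p x p cycle matrix: C_{j,j+1} = 1, C_{p,1} = 1 (0-indexed: j -> j+1 mod p) *)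
Definition cycle_mx p : 'M[C]_p := \matrix_(i < p, j < p) ((j : nat) == (i.+1 %% p)%N)%:R.

Definition xi (p : nat) : C := expi (2 * pi / (p ^ 2)%:R).

Definition Tset (p : nat) : 'M[C]_(p + p) -> Prop := fun A =>
  exists (D : 'M[C]_p) (k : 'I_p) (a : 'I_p -> 'I_p),
    [/\ is_diag_mx D, unitary_mx D, \det D = 1 &
      A = block_mx (D *m (cycle_mx p) ^+ k) 0 0
            (diag_mx (\row_(j < p) if j == 0 :> nat then 1
                                  else xi p ^+ (j * k + a j * p)%N))].
End Defs.

(* Every matrix of T is diag(W, L) with L diagonal and W = diag(d) C^k a weighted cyclic
   shift.  For k = 0 the eigenvalues of W are the entries of d; for k coprime to p, W is a
   single weighted p-cycle and its eigenvalues are exactly the p-th roots of det D = 1.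
   Let g be an eigenvalue of AB.  If g comes from the lower blocks, it is the product of
   the corresponding lower entries of A and B.  If it comes from the upper block and
   k + k' <> 0, then g^p = 1: g is an eigenvalue of whichever of A, B has a nonzero shift
   and 1 is an eigenvalue of the other.  If k + k' = 0 <> k, approximate the unimodular g
   by a power xi^m within angle pi/p^2 and pick j with k' j = m (mod p); the j-th lower
   entry b of B satisfies b^p = xi^(mp), so xi^m / b is a p-th root of unity, hence an
   eigenvalue of A, and (xi^m / b) b / g = xi^m / g. *)

From HB Require Import structures.
From mathcomp Require Import all_boot all_order all_algebra.
From mathcomp Require Import all_classical all_reals.
From mathcomp Require Import topology normedtype trigo.
From mathcomp Require Import complex.
From mathcomp Require Import ring lra zify.
Set Implicit Arguments. Unset Strict Implicit. Unset Printing Implicit Defensive.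
Import Order.TTheory GRing.Theory Num.Theory.
Local Open Scope ring_scope.

Section Expi.
Variable R : realType.
Local Notation C := R[i].

Lemma unit_neq0 (z : C) : z * z^* = 1 -> z != 0.
Proof. by apply: contra_eq_neq => ->; rewrite mul0r eq_sym oner_neq0. Qed.

Lemma expi0 : expi (0 : R) = 1.
Proof. by rewrite /expi cos0 sin0. Qed.

Lemma expiD (a b : R) : expi (a + b) = expi a * expi b.
Proof. by rewrite /expi cosD sinD; congr Complex; ring. Qed.

Lemma expiMn (a : R) m : expi a ^+ m = expi (a *+ m).
Proof.
elim: m => [|m IHm]; first by rewrite expr0 mulr0n expi0.
by rewrite exprS IHm mulrS expiD.
Qed.

Lemma expi_2pi : expi (pi *+ 2 : R) = 1.
Proof. by rewrite /expi cos2pi sin2pi. Qed.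

Lemma expi_mulconj (a : R) : expi a * (expi a)^* = 1.
Proof.
have cos2Dsin2a := cos2Dsin2 a.
by rewrite /expi /=; congr Complex; rewrite -?cos2Dsin2a; ring.
Qed.

Lemma expiN (a : R) : (expi a)^-1 = expi (- a).
Proof.
have expiaN : expi a * expi (- a) = 1 by rewrite -expiD subrr expi0.
by rewrite -[LHS]mulr1 -expiaN mulKf // unit_neq0 // expi_mulconj.
Qed.

Lemma cmod_expi (a : R) : cmod (expi a) = 1.
Proof. by rewrite /cmod /= cos2Dsin2 sqrtr1. Qed.

Lemma norm_carg_expi (a : R) : - pi <= a <= pi -> `|carg (expi a)| = `|a|.
Proof.
move=> /andP[api pia]; rewrite /carg cmod_expi divr1 /=.
have [a_ge0|a_lt0] := leP 0 a.
  by rewrite cosK ?in_itv /= ?a_ge0 //; case: ifP => _; rewrite ?normrN.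
by rewrite cosKN ?api ?(ltW a_lt0) //; case: ifP => _; rewrite ?normrN.
Qed.

Lemma carg1 : carg (1 : C) = 0.
Proof.
have pi_ge0 := pi_ge0 R.
by apply/normr0_eq0; rewrite -expi0 norm_carg_expi ?normr0 //; apply/andP; split; lra.
Qed.

Lemma unit_circle_expi (z : C) : z * z^* = 1 -> exists2 t : R, 0 <= t & expi t = z.
Proof.
case: z => a b /= [] ab1 _.
have a_bound : -1 <= a <= 1 by apply/andP; split; nra.
have [acos_bound cos_acos] := acos_def a_bound.
have sin_acos_a : sin (acos a) = `|b|.
  by rewrite sin_acos // -ab1 (_ : _ - _ = b ^+ 2) ?sqrtr_sqr //; ring.
have [b_ge0|b_lt0] := leP 0 b.
  by exists (acos a); [lra | rewrite /expi cos_acos sin_acos_a ger0_norm].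
exists (- acos a + pi *+ 2); first by rewrite mulr2n; lra.
by rewrite /expi cosD2pi sinD2pi cosN sinN cos_acos sin_acos_a ltr0_norm ?opprK.
Qed.

Lemma expi_root_near (N : nat) (z : C) : (0 < N)%N -> z * z^* = 1 ->
  exists m : nat, `|carg (expi (2 * pi / N%:R) ^+ m / z)| <= pi / N%:R.
Proof.
move=> N_gt0 /unit_circle_expi [t t_ge0 <-].
have N_gt0' : (0 : R) < N%:R by rewrite ltr0n.
have pi_gt0 := pi_gt0 R.
set c := 2 * pi / N%:R.
have c_gt0 : 0 < c by rewrite divr_gt0 ?mulr_gt0.
exists (Num.truncn (t / c + 2^-1)); set m := Num.truncn _.
have m_le : m%:R <= t / c + 2^-1 by rewrite truncn_le; have := divr_ge0 t_ge0 (ltW c_gt0); lra.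
have m_gt : t / c + 2^-1 < m%:R + 1 by rewrite natr1 truncnS_gt.
have half_c : c / 2 = pi / N%:R by rewrite /c; field; exact: lt0r_neq0.
have dist_le : `|c *+ m - t| <= pi / N%:R.
  have -> : c *+ m - t = c * (m%:R - t / c) by rewrite -mulr_natr; field; exact: lt0r_neq0.
  rewrite normrM gtr0_norm // -half_c; apply: ler_wpM2l; first exact: ltW.
  by rewrite ler_norml; apply/andP; split; lra.
have piN_le : pi / N%:R <= pi :> R.
  by apply: ler_piMr; [exact: ltW | rewrite invf_le1 // ler1n].
rewrite expiMn expiN -expiD norm_carg_expi; first exact: dist_le.
by move: dist_le; rewrite ler_norml => /andP[]; lra.
Qed.

End Expi.

Section NearFactor.
Variable R : realType.
Local Notation C := R[i].

Definition near_factor m (eps : R) (A B : 'M[C]_m) (g : C) :=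
  exists a b, [/\ spectrum A a, spectrum B b & `|carg (a * b / g)| / (2 * pi) <= eps].

Lemma near_factor_exact m eps (A B : 'M[C]_m) a b : 0 <= eps ->
  spectrum A a -> spectrum B b -> a * b != 0 -> near_factor eps A B (a * b).
Proof.
by move=> eps_ge0 A_a B_b ab_neq0; exists a, b; rewrite mulfV // carg1 normr0 mul0r.
Qed.

Lemma turns_le (x N : R) : 0 < N -> x <= pi / N -> x / (2 * pi) <= 1 / (2 * N).
Proof.
move=> N_gt0 x_le; have pi_gt0 := pi_gt0 R.
rewrite ler_pdivrMr ?mulr_gt0 //; apply: (le_trans x_le); rewrite le_eqVlt; apply/orP; left.
by apply/eqP; field; rewrite !lt0r_neq0.
Qed.

End NearFactor.

Section OrdinalArith.
Variable n : nat.
Local Notation p := n.+1.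
Implicit Types k : 'I_p.

Lemma mulrn_ord_inj k : coprime k p -> injective (fun t : 'I_p => k *+ t).
Proof.
move=> k_cop; suff le_inj (t t' : 'I_p) : (t <= t')%N -> k *+ t = k *+ t' -> t = t'.
  move=> t t' /= eq_kt; have [le_tt'|/ltnW le_t't] := leqP t t'.
    exact: le_inj le_tt' eq_kt.
  by apply/esym/(le_inj _ _ le_t't).
move=> le_tt' /(congr1 val); rewrite !Zp_mulrn /= => /eqP.
rewrite eq_sym eqn_mod_dvd ?leq_mul2l ?le_tt' ?orbT // -mulnBr Gauss_dvdr; last first.
  by rewrite coprime_sym.
have lt_p : (t' - t < p)%N by apply: leq_ltn_trans (leq_subr _ _) (ltn_ord _).
move=> p_dvd; apply/val_inj/eqP; rewrite eqn_leq le_tt' /= -subn_eq0.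
by apply: contraTT p_dvd; rewrite -lt0n => sub_gt0; rewrite gtnNdvd.
Qed.

Lemma mulrn_ord_p k : k *+ p = 0.
Proof. by apply/val_inj; rewrite Zp_mulrn /= modnMl. Qed.

Lemma coprime_ord k : prime p -> k != 0 -> coprime k p.
Proof.
move=> p_prime k_neq0; rewrite coprime_sym prime_coprime // gtnNdvd ?ltn_ord // lt0n.
by apply: contraNneq k_neq0 => k0; apply/eqP; apply: val_inj.
Qed.

Lemma expr_ordD (R : nzRingType) (z : R) (x y : 'I_p) :
  z ^+ p = 1 -> z ^+ (x + y)%R = z ^+ x * z ^+ y.
Proof. by move=> z_root; rewrite /= expr_mod // exprD. Qed.

Lemma expr_inZp (R : nzRingType) (z : R) m :
  z ^+ p = 1 -> z ^+ (inZp m : 'I_p) = z ^+ m.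
Proof. by move=> z_root; rewrite /= expr_mod. Qed.

End OrdinalArith.

Section WeightedShift.
Variables (R : nzRingType) (n : nat).
Local Notation p := n.+1.

Definition wshift (d : 'I_p -> R) (k : 'I_p) : 'M[R]_p :=
  \matrix_(i, j) if j == i + k then d i else 0.

Lemma wshiftM d e k l : wshift d k *m wshift e l = wshift (fun i => d i * e (i + k)) (k + l).
Proof.
apply/matrixP => i j; rewrite !mxE (bigD1 (i + k)) //= big1 ?addr0 => [|r /negbTE r_neq].
  by rewrite !mxE eqxx addrA; case: ifP => _; rewrite ?mulr0.
by rewrite !mxE r_neq mul0r.
Qed.

Lemma diag_mx_wshift (r : 'rV[R]_p) : diag_mx r = wshift (r 0) 0.
Proof. by apply/matrixP => i j; rewrite !mxE addr0 eq_sym; case: eqP. Qed.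

Lemma wshift1 : wshift (fun _ => 1) 0 = 1%:M.
Proof.
by rewrite -diag_const_mx diag_mx_wshift; congr wshift; apply: funext => i; rewrite mxE.
Qed.

Lemma mulmx_block_diag m1 m2 (A A' : 'M[R]_m1) (B B' : 'M[R]_m2) :
  block_mx A 0 0 B *m block_mx A' 0 0 B' = block_mx (A *m A') 0 0 (B *m B').
Proof. by rewrite mulmx_block !mulmx0 !mul0mx !addr0 !add0r. Qed.

End WeightedShift.

Section Spectrum.
Variable F : fieldType.

Lemma eigenvalue_block_diag m n (M : 'M[F]_m) (N : 'M[F]_n) g :
  eigenvalue (block_mx M 0 0 N) g = eigenvalue M g || eigenvalue N g.
Proof. by rewrite !eigenvalue_root_char /char_poly char_block_diag_mx det_ublock rootM. Qed.

Lemma eigenvalue_diag_mx n (r : 'rV[F]_n) g : eigenvalue (diag_mx r) g = (g \in codom (r 0)).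
Proof.
rewrite eigenvalue_root_char char_poly_trig ?diag_mx_is_trig //.
rewrite (eq_bigr (fun i => 'X - (r 0 i)%:P)) => [|i _]; last by rewrite mxE eqxx.
by rewrite -(big_map (r 0) predT (fun a => 'X - a%:P)) root_prod_XsubC codomE enumT.
Qed.

End Spectrum.

Section ShiftSpectrum.
Variables (F : fieldType) (n : nat).
Local Notation p := n.+1.
Implicit Types (d : 'I_p -> F) (k : 'I_p) (g : F).

Lemma prod_wshift_orbit d k i : coprime k p -> \prod_(t < p) d (i + k *+ t) = \prod_j d j.
Proof.
move=> k_cop; have orbit_inj : injective (fun t : 'I_p => i + k *+ t).
  by move=> t t' /addrI; apply: mulrn_ord_inj.
by rewrite [RHS](reindex_inj orbit_inj).
Qed.

Lemma wshift_eigenvectorE (v : 'rV[F]_p) d k g :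
  v *m wshift d k = g *: v <-> forall i, v 0 i * d i = g * v 0 (i + k).
Proof.
have vM j : (v *m wshift d k) 0 j = v 0 (j - k) * d (j - k).
  rewrite mxE (bigD1 (j - k)) //= big1 ?addr0 => [|r r_neq]; first by rewrite mxE subrK eqxx.
  by rewrite mxE -subr_eq eq_sym (negbTE r_neq) mulr0.
split=> [/matrixP eig i | eig]; first by have := eig 0 (i + k); rewrite vM mxE addrK.
by apply/matrixP => i j; rewrite ord1 vM mxE eig subrK.
Qed.

Lemma eigenvalue_wshift0 d g : eigenvalue (wshift d 0) g = (g \in codom d).
Proof.
rewrite (_ : wshift d 0 = diag_mx (\row_i d i)) ?eigenvalue_diag_mx.
  by congr (_ \in _); apply: eq_codom => i; rewrite mxE.
by rewrite diag_mx_wshift; congr wshift; apply: funext => i; rewrite mxE.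
Qed.

Lemma eigenvalue_wshift_expn d k g : coprime k p ->
  eigenvalue (wshift d k) g -> g ^+ p = \prod_i d i.
Proof.
move=> k_cop /eigenvalueP[v /wshift_eigenvectorE eig v_neq0].
have [i0 vi0_neq0] : exists i, v 0 i != 0.
  apply/existsP; apply: contraR v_neq0 => /existsPn v0.
  by apply/eqP/matrixP => i j; rewrite ord1 mxE; apply/eqP/negPn/v0.
have iter m : v 0 i0 * \prod_(t < m) d (i0 + k *+ t) = g ^+ m * v 0 (i0 + k *+ m).
  elim: m => [|m IHm]; first by rewrite big_ord0 mulr1 expr0 mul1r addr0.
  by rewrite big_ord_recr /= mulrA IHm -mulrA eig exprSr -mulrA -addrA -mulrSr.
apply: (mulIf vi0_neq0); rewrite [RHS]mulrC -(prod_wshift_orbit d i0 k_cop) iter.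
by rewrite mulrn_ord_p addr0.
Qed.

Lemma wshift_eigenvalue_of_expn d k g : coprime k p -> g != 0 -> g ^+ p = \prod_i d i ->
  eigenvalue (wshift d k) g.
Proof.
move=> k_cop g_neq0 g_root; have k_inj := mulrn_ord_inj k_cop.
have kK i : k *+ invF k_inj i = i := f_invF k_inj i.
pose w t := g ^- t * \prod_(s < t) d (k *+ s).
have w_step t : g * w t.+1 = w t * d (k *+ t).
  by rewrite /w big_ord_recr /= exprSr invfM; field; rewrite expf_neq0.
have w_period : w p = w 0.
  rewrite /w big_ord0 expr0 invr1 mulr1.
  rewrite (eq_bigr (fun t : 'I_p => d (0 + k *+ t))) => [|t _]; last by rewrite add0r.
  by rewrite prod_wshift_orbit // -g_root mulVf ?expf_neq0.
have inv0 : invF k_inj 0 = 0 by apply: (k_inj); rewrite /= kK mulr0n.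
have v0 : (\row_i w (invF k_inj i)) 0 0 = 1 by rewrite mxE inv0 /w big_ord0 expr0 invr1 mulr1.
apply/eigenvalueP; exists (\row_i w (invF k_inj i)); last first.
  by apply: contra_eq_neq v0 => ->; rewrite mxE eq_sym oner_neq0.
apply/wshift_eigenvectorE => i; rewrite !mxE.
set t := invF k_inj i; have def_i : i = k *+ t by rewrite /= kK.
have [t_max|t_lt] := eqVneq (t : nat) n.
  have -> : invF k_inj (i + k) = 0.
    by apply: (k_inj); rewrite /= kK mulr0n def_i -mulrSr t_max mulrn_ord_p.
  by rewrite -w_period (_ : w p = w t.+1) ?w_step -?def_i // t_max.
have t1_lt : (t.+1 < p)%N by rewrite ltn_neqAle eqSS t_lt ltn_ord.
have -> : invF k_inj (i + k) = Ordinal t1_lt by apply: (k_inj); rewrite /= kK def_i mulrSr.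
by rewrite w_step -def_i.
Qed.

End ShiftSpectrum.

Section TsetMatrices.
Variables (R : realType) (n : nat).
Local Notation C := R[i].
Local Notation p := n.+1.
Local Notation xi := (xi R p).
Implicit Types (d : 'I_p -> C) (k j : 'I_p) (a : 'I_p -> 'I_p).

Lemma cycle_mx_wshift : cycle_mx R p = wshift (fun _ => 1) Zp1.
Proof.
apply/matrixP => i j; rewrite !mxE -val_eqE /= modnDmr addn1.
by case: eqP.
Qed.

Lemma cycle_mxX k : cycle_mx R p ^+ k = wshift (fun _ => 1) k.
Proof.
have cycle_mxXn m : cycle_mx R p ^+ m = wshift (fun _ => 1) (Zp1 *+ m).
  elim: m => [|m IHm]; first by rewrite expr0 mulr0n wshift1.
  by rewrite exprS IHm cycle_mx_wshift -mulmxE wshiftM mulrS mulr1.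
rewrite cycle_mxXn Zp_mulrn; congr wshift; apply/val_inj => /=.
by rewrite modnMml mul1n modn_small.
Qed.

Lemma adjmx_wshift d k : adjmx (wshift d k) = wshift (fun i => (d (i - k))^*) (- k).
Proof.
apply/matrixP => i j; rewrite !mxE [j == _]eq_sym subr_eq.
by case: eqP => [->|_]; rewrite ?addrK ?conjC0.
Qed.

Lemma adjmx_block_diag m1 m2 (A : 'M[C]_m1) (B : 'M[C]_m2) :
  adjmx (block_mx A 0 0 B) = block_mx (adjmx A) 0 0 (adjmx B).
Proof. by rewrite /adjmx map_block_mx tr_block_mx !map_mx0 !trmx0. Qed.

Lemma wshift_unitary d k : (forall i, d i * (d i)^* = 1) -> unitary_mx (wshift d k).
Proof.
move=> d_unit; rewrite /unitary_mx adjmx_wshift wshiftM subrr -wshift1.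
by congr wshift; apply: funext => i; rewrite addrK d_unit.
Qed.

Definition su_diag d := (forall i, d i * (d i)^* = 1) /\ \prod_i d i = 1.

Lemma su_diagM d d' k : su_diag d -> su_diag d' -> su_diag (fun i => d i * d' (i + k)).
Proof.
move=> [d_unit d_det] [d'_unit d'_det]; split=> [i|].
  by rewrite rmorphM mulrACA d_unit d'_unit mulr1.
by rewrite big_split /= d_det mul1r -[RHS]d'_det [RHS](reindex_inj (addIr k)).
Qed.

Lemma su_diagV d k : su_diag d -> su_diag (fun i => (d (i - k))^*).
Proof.
move=> [d_unit d_det]; split=> [i|]; first by rewrite conjCK mulrC d_unit.
transitivity ((\prod_i d i)^*); last by rewrite d_det rmorph1.
by rewrite -rmorph_prod [in RHS](reindex_inj (addIr (- k))).
Qed.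

Lemma xi_unit m : xi ^+ m * (xi ^+ m)^* = 1.
Proof. by rewrite rmorphXn -exprMn expi_mulconj expr1n. Qed.

Lemma xi_expn_p : (xi ^+ p) ^+ p = 1.
Proof.
rewrite -exprM /xi expiMn mulnn -(mulr_natr (2 * pi / _)) divfK ?pnatr_eq0 ?expn_eq0 //.
by rewrite mulr_natl expi_2pi.
Qed.

Definition tail_diag k a j : C := if j == 0 :> nat then 1 else xi ^+ (j * k + a j * p).

(* The carry (k + k') / p of the exponent j (k + k') moves into the exponent of xi^p. *)
Definition tail_add k k' a a' j : 'I_p := a j + a' j + inZp (j * ((k + k') %/ p)).

Lemma tail_diagE k a j : j != 0 :> nat -> tail_diag k a j = xi ^+ (j * k) * (xi ^+ p) ^+ a j.
Proof.
by move=> /negbTE j_neq0; rewrite /tail_diag j_neq0 exprD [(a j * p)%N]mulnC (exprM _ p).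
Qed.

Lemma tail_diagM k k' a a' j :
  tail_diag k a j * tail_diag k' a' j = tail_diag (k + k') (tail_add k k' a a') j.
Proof.
have [j0|j_neq0] := eqVneq (j : nat) 0; first by rewrite /tail_diag j0 mulr1.
have carry : xi ^+ (j * k) * xi ^+ (j * k') =
    xi ^+ (j * (k + k')%R) * (xi ^+ p) ^+ (j * ((k + k') %/ p)).
  rewrite -exprM -!exprD /=; congr (_ ^+ _).
  by have := divn_eq (k + k') p; nia.
rewrite !tail_diagE // /tail_add !expr_ordD ?expr_inZp ?xi_expn_p // mulrACA carry.
ring.
Qed.

Lemma tail_diag_expn k a j : tail_diag k a j ^+ p = (xi ^+ p) ^+ (k *+ j)%R.
Proof.
rewrite Zp_mulrn expr_inZp ?xi_expn_p //.
have [j0|j_neq0] := eqVneq (j : nat) 0; first by rewrite /tail_diag j0 muln0 expr1n expr0.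
by rewrite tail_diagE // exprMn (exprAC (xi ^+ p)) xi_expn_p expr1n mulr1 exprAC mulnC.
Qed.

Lemma tail_diag_unit k a j : tail_diag k a j * (tail_diag k a j)^* = 1.
Proof. by rewrite /tail_diag; case: ifP => _; rewrite ?conjC1 ?mulr1 ?xi_unit. Qed.

Definition Tmx d k a : 'M[C]_(p + p) :=
  block_mx (wshift d k) 0 0 (wshift (tail_diag k a) 0).

Lemma Tmx_diagE (r : 'rV[C]_p) k a :
  block_mx (diag_mx r *m cycle_mx R p ^+ k) 0 0 (diag_mx (\row_j tail_diag k a j)) =
  Tmx (r 0) k a.
Proof.
rewrite /Tmx cycle_mxX !diag_mx_wshift wshiftM add0r.
by congr block_mx; congr wshift; apply: funext => i; rewrite ?mulr1 ?mxE.
Qed.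

Lemma TsetP A : Tset A <-> exists d k a, su_diag d /\ A = Tmx d k a.
Proof.
split=> [[D [k [a [/diag_mxP[r ->] D_unitary D_det ->]]]] | [d [k [a [[d_unit d_det] ->]]]]].
  exists (r 0), k, a; split; last exact: Tmx_diagE.
  split=> [i|]; last by rewrite -det_diag.
  move: D_unitary => /matrixP/(_ i i).
  by rewrite diag_mx_wshift adjmx_wshift wshiftM !mxE !subr0 !addr0 eqxx.
exists (diag_mx (\row_i d i)), k, a; split.
- exact: diag_mx_is_diag.
- by rewrite diag_mx_wshift; apply: wshift_unitary => i; rewrite mxE.
- by rewrite det_diag -[RHS]d_det; apply: eq_bigr => i _; rewrite mxE.
- by rewrite Tmx_diagE; congr Tmx; apply: funext => i; rewrite mxE.
Qed.

Lemma TmxM d d' k k' a a' :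
  Tmx d k a *m Tmx d' k' a' = Tmx (fun i => d i * d' (i + k)) (k + k') (tail_add k k' a a').
Proof.
rewrite /Tmx mulmx_block_diag !wshiftM addr0; congr block_mx; congr wshift.
by apply: funext => j; rewrite addr0 tail_diagM.
Qed.

Lemma Tmx1 : Tmx (fun _ => 1) 0 (fun _ => 0) = 1%:M.
Proof.
rewrite /Tmx wshift1 (scalar_mx_block p p 1) -wshift1; congr block_mx; congr wshift.
by apply: funext => j; rewrite /tail_diag muln0 mul0n expr0; case: ifP.
Qed.

Lemma Tmx_unitary d k a : su_diag d -> unitary_mx (Tmx d k a).
Proof.
move=> [d_unit _]; rewrite /unitary_mx adjmx_block_diag mulmx_block_diag.
by rewrite !wshift_unitary ?scalar_mx_block //; exact: tail_diag_unit.
Qed.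

Lemma Tset_unitary_group : unitary_group (@Tset R p).
Proof.
split.
- apply/TsetP; exists (fun _ => 1), 0, (fun _ => 0); rewrite Tmx1.
  by do !split=> //; rewrite ?conjC1 ?mulr1 ?big1.
- move=> _ _ /TsetP[d [k [a [su_d ->]]]] /TsetP[d' [k' [a' [su_d' ->]]]].
  apply/TsetP; rewrite TmxM.
  exists (fun i => d i * d' (i + k)), (k + k'), (tail_add k k' a a').
  by split; first exact: su_diagM.
- move=> _ /TsetP[d [k [a [su_d ->]]]].
  pose a' j : 'I_p := - (a j + inZp (j * ((k + (- k)%R)%N %/ p))).
  exists (Tmx (fun i => (d (i - k))^*) (- k) a').
    by apply/TsetP; exists (fun i => (d (i - k))^*), (- k), a'; split; first exact: su_diagV.
  rewrite TmxM subrr -Tmx1; congr Tmx; apply: funext => i.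
    by case: su_d => d_unit _; rewrite addrK d_unit.
  by rewrite /tail_add addrAC subrr.
- by move=> _ /TsetP[d [k [a [su_d ->]]]]; exact: Tmx_unitary.
Qed.

Lemma spectrum_Tmx d k a g :
  spectrum (Tmx d k a) g = eigenvalue (wshift d k) g || (g \in codom (tail_diag k a)).
Proof. by rewrite /spectrum /Tmx eigenvalue_block_diag eigenvalue_wshift0. Qed.

Local Notation eps := (1 / (2 * (p ^ 2)%:R) : R).
Hypothesis p_prime : prime p.

Lemma eps_ge0 : 0 <= eps.
Proof. by rewrite divr_ge0 ?mulr_ge0 ?ler0n. Qed.

Lemma eigenvalue_su_wshift d k g : su_diag d -> k != 0 ->
  eigenvalue (wshift d k) g = (g ^+ p == 1).
Proof.
move=> [_ d_det] /(coprime_ord p_prime) k_cop; rewrite -d_det.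
apply/idP/eqP => [|g_root]; first exact: eigenvalue_wshift_expn.
apply: wshift_eigenvalue_of_expn => //; apply: contra_eq_neq g_root => ->.
by rewrite d_det expr0n eq_sym oner_eq0.
Qed.

Lemma spectrum_Tmx_one d k a : spectrum (Tmx d k a) 1.
Proof. by rewrite spectrum_Tmx (_ : 1 = tail_diag k a 0) ?codom_f ?orbT. Qed.

Lemma near_factor_Tmx_tail d d' k k' a a' g :
  g \in codom (tail_diag (k + k') (tail_add k k' a a')) ->
  near_factor eps (Tmx d k a) (Tmx d' k' a') g.
Proof.
move=> /codomP[j ->]; rewrite -tail_diagM.
apply: near_factor_exact; rewrite ?eps_ge0 ?spectrum_Tmx ?codom_f ?orbT //.
by rewrite mulf_neq0 // unit_neq0 // tail_diag_unit.
Qed.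

Lemma near_factor_Tmx_shift d d' k k' a a' g : su_diag d -> su_diag d' -> k + k' != 0 ->
  eigenvalue (wshift (fun i => d i * d' (i + k)) (k + k')) g ->
  near_factor eps (Tmx d k a) (Tmx d' k' a') g.
Proof.
move=> su_d su_d' kk'_neq0.
rewrite (eigenvalue_su_wshift _ (su_diagM k su_d su_d') kk'_neq0) => /eqP g_root.
have g_neq0 : g != 0.
  by apply: contra_eq_neq g_root => ->; rewrite expr0n eq_sym oner_eq0.
have [k0|k_neq0] := eqVneq k 0.
  have k'_neq0 : k' != 0 by rewrite k0 add0r in kk'_neq0.
  have B_g : spectrum (Tmx d' k' a') g.
    by rewrite spectrum_Tmx eigenvalue_su_wshift ?g_root ?eqxx.
  by have := near_factor_exact eps_ge0 (spectrum_Tmx_one d k a) B_g; rewrite mul1r; apply.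
have A_g : spectrum (Tmx d k a) g by rewrite spectrum_Tmx eigenvalue_su_wshift ?g_root ?eqxx.
by have := near_factor_exact eps_ge0 A_g (spectrum_Tmx_one d' k' a'); rewrite mulr1; apply.
Qed.

Lemma near_factor_Tmx_opp_shift d d' k k' a a' g : su_diag d -> su_diag d' -> k + k' = 0 ->
  eigenvalue (wshift (fun i => d i * d' (i + k)) (k + k')) g ->
  near_factor eps (Tmx d k a) (Tmx d' k' a') g.
Proof.
move=> su_d su_d' kk'0; rewrite kk'0 eigenvalue_wshift0 => /codomP[i g_def].
have g_unit : g * g^* = 1 by rewrite g_def; case: (su_diagM k su_d su_d').
have [k0|k_neq0] := eqVneq k 0.
  have k'0 : k' = 0 by rewrite -kk'0 k0 add0r.
  rewrite g_def; apply: near_factor_exact; rewrite ?eps_ge0 -?g_def ?unit_neq0 //.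
    by rewrite spectrum_Tmx k0 eigenvalue_wshift0 codom_f.
  by rewrite spectrum_Tmx k0 k'0 eigenvalue_wshift0 addr0 codom_f.
have k'_neq0 : k' != 0 by apply: contra_neq k_neq0 => k'0; rewrite -kk'0 k'0 addr0.
have [m near_m] : exists m, `|carg (xi ^+ m / g)| <= pi / (p ^ 2)%:R.
  by apply: expi_root_near; rewrite ?expn_gt0.
have k'_inj := mulrn_ord_inj (coprime_ord p_prime k'_neq0).
pose j := invF k'_inj (inZp m); have k'j : k' *+ j = inZp m := f_invF k'_inj (inZp m).
pose b := tail_diag k' a' j; have b_neq0 : b != 0 := unit_neq0 (tail_diag_unit k' a' j).
exists (xi ^+ m / b), b; split.
- rewrite spectrum_Tmx eigenvalue_su_wshift // exprMn exprVn tail_diag_expn k'j.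
  by rewrite expr_inZp ?xi_expn_p // exprAC mulfV ?eqxx // expf_neq0 // unit_neq0 ?xi_unit.
- by rewrite spectrum_Tmx codom_f orbT.
- by rewrite divfK //; apply: turns_le; rewrite ?ltr0n ?expn_gt0.
Qed.

Lemma near_factor_TmxM d d' k k' a a' g : su_diag d -> su_diag d' ->
  spectrum (Tmx d k a *m Tmx d' k' a') g -> near_factor eps (Tmx d k a) (Tmx d' k' a') g.
Proof.
move=> su_d su_d'; rewrite TmxM spectrum_Tmx => /orP[g_shift|].
  have [kk'0|kk'_neq0] := eqVneq (k + k') 0; first exact: near_factor_Tmx_opp_shift.
  exact: near_factor_Tmx_shift.
exact: near_factor_Tmx_tail.
Qed.

End TsetMatrices.

Theorem theorem5 (R : realType) (p : nat) :
  prime p -> odd p ->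
  ASM (1 / (2 * (p ^ 2)%:R)) (@Tset R p).
Proof.
case: p => [//|n] p_prime _; split; first exact: Tset_unitary_group.
move=> _ _ /TsetP[d [k [a [su_d ->]]]] /TsetP[d' [k' [a' [su_d' ->]]]].
move=> g; exact (near_factor_TmxM p_prime su_d su_d').
Qed.
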